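(* Let $\ell\in\mathbb{N}$ and let $G$ be a finite $\ell$-tuple regular group that can be generated by $\ell$ elements. Then $G$ is $1$-ultrahomogeneous, i.e. any two elements of $G$ of the same order are mapped to each other by some automorphism of $G$.
   Context: For $\ell\in\mathbb{N}$, a finite group $G$ is $\ell$-tuple regular if for all tuples $(g_1,\ldots,g_\ell),(h_1,\ldots,h_\ell)\in G^\ell$ (entries may repeat) for which $g_i\mapsto h_i$ defines an isomorphism $\langle g_1,\ldots,g_\ell\rangle\to\langle h_1,\ldots,h_\ell\rangle$, there exists a bijection $\Psi\colon G\to G$ such that for every $g\in G$ the assignment $g_1\mapsto h_1,\ldots,g_\ell\mapsto h_\ell,g\mapsto\Psi(g)$ defines an isomorphism $\langle g_1,\ldots,g_\ell,g\rangle\to\langle h_1,\ldots,h_\ell,\Psi(g)\rangle$. *)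

From mathcomp Require Import all_boot all_fingroup.
Set Implicit Arguments. Unset Strict Implicit. Unset Printing Implicit Defensive.
Import GroupScope.
Local Open Scope group_scope.

Definition gen_seq (gT : finGroupType) (s : seq gT) : {group gT} :=
  <<[set x in s]>>%G.

Definition tuple_iso (gT : finGroupType) (g h : seq gT) : Prop :=
  size g = size h /\
  exists f : {morphism gen_seq g >-> gT},
    isom (gen_seq g) (gen_seq h) f /\
    forall i, i < size g -> f (nth 1 g i) = nth 1 h i.

Definition tuple_regular (l : nat) (gT : finGroupType) : Prop :=
  forall g h : l.-tuple gT, tuple_iso g h ->
    exists Psi : gT -> gT, bijective Psi /\
      forall x : gT, tuple_iso (rcons g x) (rcons h (Psi x)).

Definition generated_by (l : nat) (gT : finGroupType) : Prop :=
  exists g : l.-tuple gT, gen_seq g = [set: gT] :> {set gT}.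

(* Start from the isomorphism <x> -> <y>, x |-> y, of cyclic groups of equal
   order.  Padding with identities, l-tuple regularity extends a partial
   isomorphism on at most l elements by one more element; doing this for the
   l generators of G turns x |-> y into an isomorphism defined on all of G,
   i.e. an automorphism sending x to y. *)

From mathcomp Require Import all_boot all_fingroup.
From mathcomp Require Import cyclic.
Set Implicit Arguments.
Unset Strict Implicit.
Unset Printing Implicit Defensive.
Local Open Scope group_scope.

Section TupleIso.

Variable gT : finGroupType.
Implicit Types (s t : seq gT) (idx : seq nat).

Lemma nth_mem_gen_seq s i : nth 1 s i \in gen_seq s.
Proof.
have [lt_i_s | le_s_i] := ltnP i (size s); last by rewrite nth_default.
by apply: mem_gen; rewrite inE mem_nth.
Qed.

Lemma gen_seq_map_nth_sub s idx :
  gen_seq [seq nth 1 s i | i <- idx] \subset gen_seq s.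
Proof.
rewrite gen_subG; apply/subsetP => y; rewrite inE => /mapP[i _ ->].
exact: nth_mem_gen_seq.
Qed.

Lemma tuple_iso_map_nth s t idx :
  tuple_iso s t ->
  tuple_iso [seq nth 1 s i | i <- idx] [seq nth 1 t i | i <- idx].
Proof.
case=> eq_st [f [iso_f f_s]]; split; first by rewrite !size_map.
(* Out-of-range indices read the default 1 on both sides, which f fixes. *)
have f_nth i : f (nth 1 s i) = nth 1 t i.
  have [/f_s // | le_s_i] := ltnP i (size s).
  by rewrite !nth_default -?eq_st ?morph1.
have sub := gen_seq_map_nth_sub s idx.
exists (restrm sub f); split=> [|i]; last first.
  by rewrite size_map => lt_i /=; rewrite !(nth_map 0) ?f_nth.
apply: restr_isom_to iso_f; rewrite morphim_gen; last first.
  by apply: subset_trans (subset_gen _) sub.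
congr <<_>>; rewrite morphimEsub ?(subset_trans (subset_gen _) sub) //.
apply/setP => y; rewrite inE; apply/imsetP/mapP => [[x] | [i idx_i ->]].
  by rewrite inE => /mapP[i idx_i ->] ->; exists i; rewrite ?f_nth.
by exists (nth 1 s i); rewrite ?inE ?f_nth ?map_f.
Qed.

Lemma nth_cat_nseq1 s n i : nth 1 (s ++ nseq n 1) i = nth 1 s i.
Proof.
rewrite nth_cat nth_nseq; case: ltnP => // le_s_i.
by rewrite nth_default //; case: ifP.
Qed.

Lemma tuple_iso_pad s t n :
  tuple_iso s t -> tuple_iso (s ++ nseq n 1) (t ++ nseq n 1).
Proof.
move=> st; have [eq_st _] := st.
have pad_map_nth (u : seq gT) : size u = size s ->
    u ++ nseq n 1 = [seq nth 1 u i | i <- iota 0 (size s + n)].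
  move=> eq_u; have <- : size (u ++ nseq n 1) = size s + n.
    by rewrite size_cat size_nseq eq_u.
  by rewrite -(eq_map (nth_cat_nseq1 u n)) map_nth_iota0 // take_size.
by rewrite !pad_map_nth //; apply: tuple_iso_map_nth.
Qed.

Lemma tuple_iso_unpad s t n z w : size s = size t ->
  tuple_iso (rcons (s ++ nseq n 1) z) (rcons (t ++ nseq n 1) w) ->
  tuple_iso (rcons s z) (rcons t w).
Proof.
move=> eq_st /(tuple_iso_map_nth (rcons (iota 0 (size s)) (size s + n))).
have unpad_map_nth (u : seq gT) a : size u = size s ->
    [seq nth 1 (rcons (u ++ nseq n 1) a) i
       | i <- rcons (iota 0 (size s)) (size s + n)] = rcons u a.
  move=> eq_u; rewrite map_rcons nth_rcons size_cat size_nseq eq_u ltnn eqxx.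
  congr rcons; rewrite -[RHS]take_size -eq_u -(map_nth_iota0 1) //.
  apply/eq_in_map => i; rewrite mem_iota add0n => lt_i_u.
  by rewrite nth_rcons size_cat size_nseq ltn_addr // nth_cat_nseq1.
by rewrite !unpad_map_nth.
Qed.

Lemma tuple_iso_cycle (x y : gT) : #[x] = #[y] -> tuple_iso [:: x] [:: y].
Proof.
move=> eq_xy; have dvd_yx : #[y] %| #[x] by rewrite eq_xy.
have gen_seq1 (a : gT) : gen_seq [:: a] = <[a]>%G.
  by apply/val_inj; congr <<_>>; apply/setP => u; rewrite !inE.
split=> //; rewrite !gen_seq1; exists (eltm_morphism dvd_yx); split.
  by apply/isomP; rewrite injm_eltm eq_xy dvdnn im_eltm.
by case=> //= _; rewrite eltm_id.
Qed.

Lemma tuple_iso_aut s t : tuple_iso s t -> gen_seq s = [set: gT] :> {set gT} ->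
  exists2 f : {perm gT}, f \in Aut [set: gT] &
    forall i, i < size s -> f (nth 1 s i) = nth 1 t i.
Proof.
case=> _ [f [/isomP[inj_f _] f_s]] gen_s.
have im_f : f @* gen_seq s = gen_seq s.
  apply/eqP; rewrite eqEcard card_injm // leqnn andbT.
  by apply/subsetP => u _; rewrite gen_s inE.
exists (aut inj_f im_f); first by rewrite -gen_s Aut_aut.
by move=> i /f_s <-; rewrite autE // gen_s inE.
Qed.

Section Regular.

Variables (l : nat) (gT_reg : tuple_regular l gT).

Lemma tuple_regular_rcons s t z : size s <= l -> tuple_iso s t ->
  exists w, tuple_iso (rcons s z) (rcons t w).
Proof.
move=> le_s_l st; have [eq_st _] := st.
have size_pad (u : seq gT) :
    size u = size s -> size (u ++ nseq (l - size s) 1) == l.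
  by move=> eq_u; rewrite size_cat size_nseq eq_u subnKC.
have [Psi [_ Psi_ext]] := @gT_reg (Tuple (size_pad s erefl))
  (Tuple (size_pad t (esym eq_st))) (tuple_iso_pad (l - size s) st).
by exists (Psi z); apply: tuple_iso_unpad (Psi_ext z).
Qed.

Lemma tuple_regular_cat s t u : size s + size u <= l.+1 -> tuple_iso s t ->
  exists v, tuple_iso (s ++ u) (t ++ v).
Proof.
elim/last_ind: u => [|u z IHu] le_su st; first by exists [::]; rewrite !cats0.
rewrite size_rcons addnS ltnS in le_su.
have [v uv] := IHu (leqW le_su) st.
have le_su_l : size (s ++ u) <= l by rewrite size_cat.
have [w uzvw] := tuple_regular_rcons z le_su_l uv.
by exists (rcons v w); rewrite -!rcons_cat.
Qed.

End Regular.

End TupleIso.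

Theorem lemma2p3 (l : nat) (gT : finGroupType) :
  tuple_regular l gT -> generated_by l gT ->
  forall x y : gT, #[x] = #[y] ->
    exists f : {perm gT}, f \in Aut [set: gT] /\ f x = y.
Proof.
move=> gT_reg [g gen_g] x y eq_xy.
have le_xg : size [:: x] + size g <= l.+1 by rewrite size_tuple.
have [v xg_yv] := tuple_regular_cat gT_reg le_xg (tuple_iso_cycle eq_xy).
have gen_xg : gen_seq (x :: g) = [set: gT] :> {set gT}.
  apply/eqP; rewrite eqEsubset subsetT -gen_g genS //.
  by apply/subsetP => u; rewrite !inE => ->; rewrite orbT.
have [f Aut_f f_xg] := tuple_iso_aut xg_yv gen_xg.
by exists f; split=> //; apply: (f_xg 0).
Qed.
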